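(* Let $\mathrm{SG}(n)$ denote the Sprague--Grundy value of a pile of $n$ tokens in the game $i\textsc{-Mark}(\{1\},\{2,3\})$. For every integer $n>0$ there exists an integer $i$ with $1\le i\le 4$ and $i\le n$ such that $\mathrm{SG}(n-i)=0$.
   Context: In the impartial game $i\textsc{-Mark}(\{1\},\{2,3\})$, played on a single pile of $n\ge0$ tokens, a move replaces $n$ by $n-1$ (if $n\ge 1$), or by $n/2$ if $n>0$ is even, or by $n/3$ if $n>0$ is divisible by $3$. The Sprague--Grundy value is defined recursively by $\mathrm{SG}(n)=\mathrm{mex}\{\mathrm{SG}(w): w \text{ an option of } n\}$, where $\mathrm{mex}(T)$ is the smallest nonnegative integer not in $T$. *)

From mathcomp Require Import all_boot.
Set Implicit Arguments. Unset Strict Implicit. Unset Printing Implicit Defensive.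

Definition options (n : nat) : seq nat :=
  (if 0 < n then [:: n.-1] else [::]) ++
  (if (0 < n) && (2 %| n) then [:: n %/ 2] else [::]) ++
  (if (0 < n) && (3 %| n) then [:: n %/ 3] else [::]).

(* mex: smallest natural number not in s (it is <= size s). *)
Definition mex (s : seq nat) : nat :=
  find (fun k => k \notin s) (iota 0 (size s).+1).

(* sg_table n = [:: SG 0; SG 1; ...; SG n]; all options of m are < m. *)
Fixpoint sg_table (n : nat) : seq nat :=
  match n with
  | 0 => [:: mex [::]]
  | m.+1 => let t := sg_table m in
            rcons t (mex [seq nth 0 t w | w <- options m.+1])
  end.

Definition SG (n : nat) : nat := nth 0 (sg_table n) n.

(* Sanity characterisation (recursive definition from the paper) *)
Definition SG_spec (f : nat -> nat) : Prop :=
  forall n, f n = mex [seq f w | w <- options n].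

From mathcomp Require Import all_boot.
From mathcomp Require Import zify.

(* The positions of Sprague-Grundy value 0 are never adjacent, since k is an
   option of k + 1.  If SG vanished nowhere on m, m + 1, m + 2, m + 3, then each
   of m + 1, m + 2, m + 3 would need a halving or thirding move to a zero; among
   three consecutive integers this forces m + 1 and m + 3 to be even, and then
   (m + 1) / 2 and (m + 3) / 2 would be adjacent zeros. *)

Lemma size_sg_table n : size (sg_table n) = n.+1.
Proof. by elim: n => [|n IHn] //=; rewrite size_rcons IHn. Qed.

Lemma nth_sg_table n k : k <= n -> nth 0 (sg_table n) k = SG k.
Proof.
elim: n => [|n IHn]; first by rewrite leqn0 => /eqP ->.
rewrite leq_eqVlt => /orP [/eqP -> //|lt_kn].
by rewrite /= nth_rcons size_sg_table lt_kn IHn.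
Qed.

Lemma mem_options n w :
  (w \in options n) =
  (0 < n) && [|| w == n.-1, (2 %| n) && (w == n %/ 2) | (3 %| n) && (w == n %/ 3)].
Proof.
rewrite /options; case: (0 < n); last by [].
by case: (2 %| n); case: (3 %| n); rewrite /= !inE ?orbF.
Qed.

Lemma options_lt n w : w \in options n -> w < n.
Proof. rewrite mem_options; lia. Qed.

Lemma SG_rec : SG_spec SG.
Proof.
case=> [|n] //.
have -> : SG n.+1 = mex [seq nth 0 (sg_table n) w | w <- options n.+1].
  by rewrite /SG /= nth_rcons size_sg_table ltnn eqxx.
congr mex; apply/eq_in_map => w /options_lt lt_wn.
by rewrite nth_sg_table.
Qed.

Lemma mex_eq0 s : (mex s == 0) = (0 \notin s).
Proof. by rewrite /mex /=; case: (0 \notin s). Qed.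

Lemma SG_succ_neq0 k : SG k = 0 -> SG k.+1 != 0.
Proof.
move=> SGk0; rewrite SG_rec mex_eq0 negbK -SGk0.
by apply: map_f; rewrite mem_options /= eqxx.
Qed.

Lemma SG_divisor_move k :
  SG k.+1 != 0 -> SG k != 0 ->
  (2 %| k.+1) && (SG (k.+1 %/ 2) == 0) || (3 %| k.+1) && (SG (k.+1 %/ 3) == 0).
Proof.
rewrite [SG k.+1]SG_rec mex_eq0 negbK => /mapP [w].
rewrite mem_options /= => /or3P [/eqP ->|/andP [-> /eqP ->]|/andP [-> /eqP ->]] SGw0;
  by rewrite -SGw0 ?eqxx ?orbT.
Qed.

Lemma SG_eq0_window m : exists2 i, i < 4 & SG (m + i) = 0.
Proof.
have [SG0|SG0] := eqVneq (SG m) 0; first by exists 0; rewrite ?addn0.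
have [SG1|SG1] := eqVneq (SG m.+1) 0; first by exists 1; rewrite ?addn1.
have [SG2|SG2] := eqVneq (SG m.+2) 0; first by exists 2; rewrite ?addn2.
have [SG3|SG3] := eqVneq (SG m.+3) 0; first by exists 3; rewrite ?addn3.
exfalso.
move: (SG_divisor_move _ SG1 SG0) (SG_divisor_move _ SG2 SG1) (SG_divisor_move _ SG3 SG2).
(* Of the eight patterns, divisibility of three consecutive integers leaves
   only 2 %| m.+1, 3 %| m.+2, 2 %| m.+3. *)
case/orP=> /andP [d1 /eqP z1]; case/orP=> /andP [d2 _];
  case/orP=> /andP [d3 /eqP z3]; try lia.
have /eqP := SG_succ_neq0 _ z1.
by have -> : (m.+1 %/ 2).+1 = m.+3 %/ 2 by lia.
Qed.

Theorem mainTheorem4 :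
  forall n : nat, 0 < n -> exists i : nat, [/\ 1 <= i, i <= 4, i <= n & SG (n - i) = 0].
Proof.
move=> n n_gt0.
have [le_n4|lt4n] := leqP n 4; first by exists n; rewrite subnn.
have [j lt_j4 SGj0] := SG_eq0_window (n - 4).
exists (4 - j); split; try lia.
by have -> : n - (4 - j) = n - 4 + j by lia.
Qed.
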